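(* Let $k\in L^1([0,\infty);(0,\infty))\cap C([0,\infty);(0,\infty))$ with $\lambda(t):=\int_t^\infty k(s)\,ds=L(t)t^{-\alpha}$ for some $\alpha>1$ and some $L$ slowly varying at infinity, and let $a=-\int_0^\infty k(s)\,ds$. Then $\int_0^\infty sk(s)\,ds<\infty$ and the resolvent $r$ (unique continuous solution of $r'(t)=ar(t)+\int_0^tk(t-s)r(s)\,ds$, $r(0)=1$) satisfies $$\lim_{t\to\infty}r(t)=\Big(1+\int_0^\infty sk(s)\,ds\Big)^{-1}.$$
   Context: $L:[0,\infty)\to(0,\infty)$ is slowly varying at infinity if $L(xt)/L(t)\to1$ as $t\to\infty$ for every $x>0$. *)

From Stdlib Require Import Reals Lra.
Open Scope R_scope.

(* [RInt_eq f a b v]: f is Riemann integrable on [a,b] with integral v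
   (RiemannInt is proof-irrelevant, so this is well-behaved). *)
Definition RInt_eq (f : R -> R) (a b v : R) : Prop :=
  exists pr : Riemann_integrable f a b, RiemannInt pr = v.

Definition tends_at_infty (f : R -> R) (l : R) : Prop :=
  forall eps, 0 < eps -> exists M, forall t, M <= t -> Rabs (f t - l) < eps.

Definition improper_int (f : R -> R) (a l : R) : Prop :=
  (forall T, a <= T -> exists v, RInt_eq f a T v) /\
  (forall eps, 0 < eps -> exists M, forall T v, M <= T -> a <= T ->
      RInt_eq f a T v -> Rabs (v - l) < eps).

Definition slowly_varying (L : R -> R) : Prop :=
  (forall t, 0 <= t -> 0 < L t) /\
  forall x, 0 < x -> tends_at_infty (fun t => L (x * t) / L t) 1.

Definition continuous_on_nonneg (f : R -> R) : Prop :=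
  forall t, 0 <= t -> limit1_in f (fun x => 0 <= x) (f t) t.

(* With [K = \int_0^oo k] and [lambda(t) = \int_t^oo k], the equation reads
   [r' = -K r + k * r]; since [lambda' = -k] and [lambda(0) = K], integrating it
   once gives [r + lambda * r = 1], and a maximum principle keeps [|r| <= 1].
   Regular variation of index [-alpha < -1] gives [lambda(2t) <= q lambda(t)]
   with [q < 1/2] for large [t], so [m = \int_0^oo lambda] is finite, and by
   parts it equals [\int_0^oo s k(s) ds].
   Tauberian step: let [M = limsup r].  At a late time where [r] is close to [M]
   and not decreasing fast, the differential equation forces [r] to stay close
   to [M] in mean on a long window before it; feeding this into
   [r + lambda * r = 1] gives [M (1 + m) <= 1].  The same argument for [-r]
   gives [liminf r >= 1 / (1 + m)]. *)

From Stdlib Require Import Reals Lra Classical ClassicalEpsilon FunctionalExtensionality.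
Open Scope R_scope.

Lemma Rabs_le_between x a : Rabs x <= a -> - a <= x <= a.
Proof. unfold Rabs; destruct Rcase_abs; lra. Qed.

Lemma Rabs_lt_between x a : Rabs x < a -> - a < x < a.
Proof. unfold Rabs; destruct Rcase_abs; lra. Qed.

Ltac continuity_tac :=
  repeat first
    [ assumption
    | solve [apply continuity_const; intros ? ?; reflexivity]
    | solve [apply derivable_continuous, derivable_id]
    | apply (continuity_comp (fun s => _ - s))
    | apply continuity_plus | apply continuity_minus | apply continuity_mult
    | apply continuity_opp ].

(** * A total Riemann integral *)

(* [RiemannInt] of some integrability proof when one exists, [0] otherwise;
   [RiemannInt] is proof irrelevant, so the choice is harmless. *)
Definition integral (f : R -> R) (a b : R) : R :=
  match excluded_middle_informative (inhabited (Riemann_integrable f a b)) with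
  | left H => RiemannInt (epsilon H (fun _ => True))
  | right _ => 0
  end.

Lemma integral_RiemannInt f a b (pr : Riemann_integrable f a b) :
  integral f a b = RiemannInt pr.
Proof.
  unfold integral; destruct excluded_middle_informative as [H|H].
  - apply RiemannInt_P5.
  - exfalso; apply H; constructor; exact pr.
Qed.

Lemma continuity_Riemann_integrable f a b :
  continuity f -> Riemann_integrable f a b.
Proof.
  intros Hf; destruct (Rle_dec a b).
  - apply continuity_implies_RiemannInt; auto.
  - apply RiemannInt_P1, continuity_implies_RiemannInt; auto; lra.
Qed.

Lemma integral_ext f g a b : (forall x, f x = g x) -> integral f a b = integral g a b.
Proof. intros H; f_equal; apply functional_extensionality; auto. Qed.

Lemma integral_const c a b : integral (fun _ => c) a b = c * (b - a).
Proof.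
  exact (eq_trans (integral_RiemannInt (fct_cte c) a b (RiemannInt_P14 a b c))
                  (RiemannInt_P15 _)).
Qed.

Section IntegralContinuous.
Variables (f g : R -> R).
Hypotheses (Hf : continuity f) (Hg : continuity g).

Lemma integral_Chasles a b c : integral f a b + integral f b c = integral f a c.
Proof.
  rewrite (integral_RiemannInt _ _ _ (continuity_Riemann_integrable f a b Hf)),
    (integral_RiemannInt _ _ _ (continuity_Riemann_integrable f b c Hf)),
    (integral_RiemannInt _ _ _ (continuity_Riemann_integrable f a c Hf)).
  apply RiemannInt_P26.
Qed.

Lemma integral_same a : integral f a a = 0.
Proof. generalize (integral_Chasles a a a); lra. Qed.

Lemma integral_swap a b : integral f b a = - integral f a b.
Proof. generalize (integral_Chasles a b a) (integral_same a); lra. Qed.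

Lemma integral_plus_scal l a b :
  integral (fun x => f x + l * g x) a b = integral f a b + l * integral g a b.
Proof.
  assert (Hc : continuity (fun x => f x + l * g x)) by continuity_tac.
  rewrite (integral_RiemannInt _ _ _ (continuity_Riemann_integrable f a b Hf)),
    (integral_RiemannInt _ _ _ (continuity_Riemann_integrable g a b Hg)),
    (integral_RiemannInt _ _ _ (continuity_Riemann_integrable _ a b Hc)).
  apply RiemannInt_P13.
Qed.

Lemma integral_minus a b :
  integral (fun x => f x - g x) a b = integral f a b - integral g a b.
Proof.
  rewrite <- (integral_ext (fun x => f x + (-1) * g x)) by (intro; ring).
  rewrite integral_plus_scal; ring.
Qed.

Lemma integral_le a b : a <= b -> (forall x, a <= x <= b -> f x <= g x) ->
  integral f a b <= integral g a b.
Proof.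
  intros Hab H.
  rewrite (integral_RiemannInt _ _ _ (continuity_Riemann_integrable f a b Hf)),
    (integral_RiemannInt _ _ _ (continuity_Riemann_integrable g a b Hg)).
  apply RiemannInt_P19; auto. intros; apply H; lra.
Qed.

End IntegralContinuous.

Lemma integral_scal c f a b : continuity f ->
  integral (fun x => c * f x) a b = c * integral f a b.
Proof.
  intros Hf. rewrite <- (integral_ext (fun x => 0 + c * f x)) by (intro; ring).
  rewrite integral_plus_scal, integral_const by continuity_tac. ring.
Qed.

Lemma integral_ge0 f a b : continuity f -> a <= b ->
  (forall x, a <= x <= b -> 0 <= f x) -> 0 <= integral f a b.
Proof.
  intros Hf Hab H. replace 0 with (integral (fun _ => 0) a b).
  - apply integral_le; auto; continuity_tac.
  - rewrite integral_const; ring.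
Qed.

Lemma integral_abs_le f g a b : continuity f -> continuity g -> a <= b ->
  (forall x, a <= x <= b -> Rabs (f x) <= g x) -> Rabs (integral f a b) <= integral g a b.
Proof.
  intros Hf Hg Hab H. apply Rabs_le. split.
  - replace (- integral g a b) with (-1 * integral g a b) by ring.
    rewrite <- integral_scal by auto. apply integral_le; auto; [continuity_tac|].
    intros x Hx; specialize (H x Hx); apply Rabs_le_between in H; lra.
  - apply integral_le; auto.
    intros x Hx; specialize (H x Hx); apply Rabs_le_between in H; lra.
Qed.

Lemma integral_abs_bound f a b M : continuity f ->
  (forall x, Rmin a b <= x <= Rmax a b -> Rabs (f x) <= M) ->
  Rabs (integral f a b) <= M * Rabs (b - a).
Proof.
  intros Hf H.
  assert (Hle : forall a b, a <= b -> (forall x, a <= x <= b -> Rabs (f x) <= M) ->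
     Rabs (integral f a b) <= M * (b - a)).
  { clear a b H; intros a b Hab H. rewrite <- integral_const.
    apply integral_abs_le; auto; continuity_tac. }
  destruct (Rle_dec a b).
  - rewrite (Rabs_right (b - a)) by lra. apply Hle; auto.
    intros x Hx; apply H; rewrite Rmin_left, Rmax_right; lra.
  - rewrite integral_swap, Rabs_Ropp, (Rabs_left (b - a)) by (auto; lra).
    replace (M * - (b - a)) with (M * (a - b)) by ring. apply Hle; [lra|].
    intros x Hx; apply H; rewrite Rmin_right, Rmax_left; lra.
Qed.

Lemma RInt_eq_integral f f0 a b v : continuity f0 -> a <= b ->
  (forall x, a <= x <= b -> f x = f0 x) -> RInt_eq f a b v -> v = integral f0 a b.
Proof.
  intros Hc Hab Heq [pr <-].
  rewrite (integral_RiemannInt _ _ _ (continuity_Riemann_integrable f0 a b Hc)).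
  apply RiemannInt_P18; auto. intros; apply Heq; lra.
Qed.

Lemma integral_RInt_eq f f0 a b : continuity f0 -> a <= b ->
  (forall x, a <= x <= b -> f x = f0 x) -> RInt_eq f a b (integral f0 a b).
Proof.
  intros Hc Hab Heq.
  assert (pr : Riemann_integrable f a b).
  { apply (Riemann_integrable_ext (f := f0)); [|apply continuity_Riemann_integrable; auto].
    intros x Hx; rewrite Rmin_left, Rmax_right in Hx by auto; symmetry; apply Heq; auto. }
  exists pr. apply (RInt_eq_integral f f0); auto. exists pr; reflexivity.
Qed.

Lemma derivable_pt_lim_integral f a x : continuity f ->
  derivable_pt_lim (fun y => integral f a y) x (f x).
Proof.
  intros Hf eps Heps.
  destruct (Hf x (eps / 2)) as [d [Hd Hclose]]; [lra|].
  exists (mkposreal d Hd). intros h Hh0 Hh; simpl in Hh.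
  rewrite <- (integral_Chasles f Hf a x (x + h)).
  replace ((integral f a x + integral f x (x + h) - integral f a x) / h - f x)
    with (integral (fun y => f y + (-1) * f x) x (x + h) / h).
  2:{ rewrite integral_plus_scal, integral_const by continuity_tac. field; auto. }
  assert (B : Rabs (integral (fun y => f y + (-1) * f x) x (x + h)) <= eps / 2 * Rabs h).
  { replace h with (x + h - x) at 2 by ring.
    apply integral_abs_bound; [continuity_tac|]. intros y Hy.
    destruct (Req_dec y x) as [->|Hyx].
    - replace (f x + -1 * f x) with 0 by ring. rewrite Rabs_R0; lra.
    - left. replace (f y + -1 * f x) with (f y - f x) by ring.
      apply Hclose. split; [unfold D_x, no_cond; split; auto|].
      simpl; unfold Rdist. apply Rabs_def1;
      unfold Rmin, Rmax in Hy; destruct (Rle_dec x (x + h));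
      apply Rabs_def2 in Hh; lra. }
  unfold Rdiv; rewrite Rabs_mult, Rabs_inv.
  apply Rle_lt_trans with (eps / 2 * Rabs h * / Rabs h).
  - apply Rmult_le_compat_r; auto. left; apply Rinv_0_lt_compat, Rabs_pos_lt; auto.
  - field_simplify; [lra | apply Rabs_no_R0; auto].
Qed.

Lemma continuity_integral f a : continuity f -> continuity (fun y => integral f a y).
Proof.
  intros Hf x. apply derivable_continuous_pt.
  exists (f x). apply derivable_pt_lim_integral; auto.
Qed.

Lemma derivable_pt_lim_0_const H a b : a <= b ->
  (forall x, a <= x <= b -> continuity_pt H x) ->
  (forall x, a < x < b -> derivable_pt_lim H x 0) -> H b = H a.
Proof.
  intros [Hab| ->] Hc Hd; [|reflexivity].
  assert (prH : forall c, a < c < b -> derivable_pt H c) by (intros c Hc'; exists 0; apply Hd, Hc').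
  assert (prid : forall c, a < c < b -> derivable_pt id c) by (intros; apply derivable_pt_id).
  destruct (MVT H id a b prH prid Hab Hc) as [c [Hc' E]].
  { intros; apply derivable_continuous_pt, derivable_pt_id. }
  rewrite (derive_pt_eq_0 _ _ _ _ (Hd c Hc')),
    (derive_pt_eq_0 _ _ _ _ (derivable_pt_lim_id c)) in E.
  unfold id in E. lra.
Qed.

Lemma derivable_pt_lim_0_const_R H a b :
  (forall x, derivable_pt_lim H x 0) -> H b = H a.
Proof.
  intros Hd. assert (Hc : forall x, continuity_pt H x).
  { intro x; apply derivable_continuous_pt; exists 0; apply Hd. }
  destruct (Rle_dec a b).
  - apply derivable_pt_lim_0_const; auto.
  - symmetry; apply derivable_pt_lim_0_const; auto; lra.
Qed.

Lemma integral_reflect f t a b : continuity f ->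
  integral (fun s => f (t - s)) a b = integral f (t - b) (t - a).
Proof.
  intros Hf.
  set (D := fun b => integral (fun s => f (t - s)) a b - integral f (t - b) (t - a)).
  assert (E : D b = D a).
  { apply derivable_pt_lim_0_const_R. intro x. unfold D.
    replace 0 with (f (t - x) - f (t - x)) by ring.
    apply derivable_pt_lim_minus.
    - apply (derivable_pt_lim_integral (fun s => f (t - s))). continuity_tac.
    - apply (derivable_pt_lim_ext (fun y => - integral f (t - a) (t - y))).
      { intro; rewrite (integral_swap f Hf (t - a)); reflexivity. }
      replace (f (t - x)) with (- (f (t - x) * (0 - 1))) by ring.
      apply (derivable_pt_lim_opp (fun y => integral f (t - a) (t - y))).
      apply (derivable_pt_lim_comp (fun y => t - y) (fun y => integral f (t - a) y)).
      + apply derivable_pt_lim_minus; [apply derivable_pt_lim_const | apply derivable_pt_lim_id].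
      + apply derivable_pt_lim_integral; auto. }
  unfold D in E. rewrite !integral_same in E by continuity_tac. lra.
Qed.
(** * Differentiating a convolution *)

Lemma continuity_pt_close f x eps : continuity_pt f x -> 0 < eps ->
  exists d, 0 < d /\ forall y, Rabs (y - x) < d -> Rabs (f y - f x) < eps.
Proof.
  intros Hc He. destruct (Hc eps He) as [d [Hd H]]. exists d; split; auto.
  intros y Hy. destruct (Req_dec y x) as [->|n].
  - unfold Rminus; rewrite Rplus_opp_r, Rabs_R0; auto.
  - apply H; split; [unfold D_x, no_cond; auto | exact Hy].
Qed.

Lemma continuity_bounded f a b : continuity f ->
  exists B, 0 < B /\ forall x, a <= x <= b -> Rabs (f x) <= B.
Proof.
  intros Hf. destruct (Rle_dec a b) as [Hab|Hab].
  - destruct (continuity_ab_maj (fun x => Rabs (f x)) a b Hab) as [M [HM _]].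
    { intros x _. apply (continuity_pt_comp f Rabs); [apply Hf | apply Rcontinuity_abs]. }
    exists (Rabs (f M) + 1). split; [generalize (Rabs_pos (f M)); lra|].
    intros x Hx; specialize (HM x Hx); simpl in HM; lra.
  - exists 1; split; [lra|]. intros; lra.
Qed.

Lemma MVT_increment phi dphi : (forall x, derivable_pt_lim phi x (dphi x)) ->
  forall x h, exists xi, Rmin x (x + h) <= xi <= Rmax x (x + h) /\
    phi (x + h) - phi x = h * dphi xi.
Proof.
  intros Hd x h. unfold Rmin, Rmax. destruct (Rle_dec x (x + h)) as [Hp|Hn].
  - destruct (Req_dec h 0) as [->|Hh0].
    + exists x. rewrite Rplus_0_r. split; [lra | ring].
    + destruct (MVT_cor2 phi dphi x (x + h)) as [c [E Hc]]; [lra | intros; apply Hd |].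
      exists c. split; [lra | rewrite E; ring].
  - destruct (MVT_cor2 phi dphi (x + h) x) as [c [E Hc]]; [lra | intros; apply Hd |].
    exists c. split; lra.
Qed.

Lemma uniform_derivative phi dphi a b eps :
  (forall x, derivable_pt_lim phi x (dphi x)) -> continuity dphi -> 0 < eps ->
  exists d, 0 < d /\ forall x h, a <= x <= b -> a <= x + h <= b -> Rabs h < d ->
    Rabs (phi (x + h) - phi x - h * dphi x) <= eps * Rabs h.
Proof.
  intros Hd Hdc He.
  assert (Hunif : exists d, 0 < d /\ forall x y, a <= x <= b -> a <= y <= b ->
             Rabs (x - y) < d -> Rabs (dphi x - dphi y) < eps).
  { destruct (Rlt_dec a b) as [Hab|Hab].
    - destruct (Heine_cor1 (f := dphi) Hab (fun x _ => Hdc x) (mkposreal eps He))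
        as [d [_ Hd']].
      exists d; split; [apply cond_pos | intros; apply Hd'; auto].
    - exists 1; split; [lra|]. intros x y Hx Hy _.
      replace x with y by lra. unfold Rminus; rewrite Rplus_opp_r, Rabs_R0; auto. }
  destruct Hunif as [d [Hd0 Hunif]]. exists d; split; auto.
  intros x h Hx Hxh Hh.
  destruct (MVT_increment phi dphi Hd x h) as [xi [Hxi ->]].
  replace (h * dphi xi - h * dphi x) with (h * (dphi xi - dphi x)) by ring.
  rewrite Rabs_mult, Rmult_comm. apply Rmult_le_compat_r; [apply Rabs_pos|].
  left; apply Hunif; auto.
  - unfold Rmin, Rmax in Hxi; destruct (Rle_dec x (x + h)); lra.
  - apply Rle_lt_trans with (Rabs h); auto.
    unfold Rmin, Rmax in Hxi; destruct (Rle_dec x (x + h));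
      apply Rabs_le; unfold Rabs; destruct (Rcase_abs h); lra.
Qed.

Section ConvolutionDerivative.
Variables (phi dphi psi : R -> R).
Hypotheses (Hphi : forall x, derivable_pt_lim phi x (dphi x))
  (Hdphi : continuity dphi) (Hpsi : continuity psi).

Let Hphi_cont : continuity phi.
Proof. intro x; apply derivable_continuous_pt; exists (dphi x); apply Hphi. Qed.

Lemma convolution_kernel_remainder t eps : 0 < eps -> exists d, 0 < d /\ forall h, Rabs h < d ->
  Rabs (integral (fun s => (phi (t + h - s) - phi (t - s) - h * dphi (t - s)) * psi s) 0 (t + h))
    <= eps * Rabs h.
Proof.
  intros Heps.
  set (T := Rabs t + 1).
  assert (HT : 0 < T) by (unfold T; generalize (Rabs_pos t); lra).
  destruct (continuity_bounded psi (- T) T Hpsi) as [B [HB HBb]].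
  set (e1 := eps / (B * T)).
  assert (He1 : 0 < e1) by (unfold e1; apply Rdiv_lt_0_compat; nra).
  destruct (uniform_derivative phi dphi (- T) T e1 Hphi Hdphi He1) as [d1 [Hd1 Hunif]].
  exists (Rmin 1 d1). split; [apply Rmin_pos; lra|]. intros h Hh.
  assert (h1 : - 1 < h < 1) by (apply Rabs_lt_between, (Rlt_le_trans _ _ _ Hh), Rmin_l).
  assert (h2 : Rabs h < d1) by (apply (Rlt_le_trans _ _ _ Hh), Rmin_r).
  assert (Hth : Rabs (t + h) <= T)
    by (unfold T, Rabs; destruct (Rcase_abs t); destruct (Rcase_abs (t + h)); lra).
  eapply Rle_trans; [apply (integral_abs_bound _ _ _ (e1 * Rabs h * B)); [continuity_tac|] |].
  - intros s Hs.
    assert (Hs' : - T <= s <= T /\ - T <= t - s <= T).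
    { unfold T, Rmin, Rmax in *; destruct (Rle_dec 0 (t + h)); unfold Rabs in *;
        destruct (Rcase_abs t); lra. }
    rewrite Rabs_mult. apply Rmult_le_compat; try apply Rabs_pos.
    + replace (t + h - s) with (t - s + h) by ring. apply Hunif; try lra.
      unfold T, Rmin, Rmax in *; destruct (Rle_dec 0 (t + h)); unfold Rabs in *;
        destruct (Rcase_abs t); lra.
    + apply HBb; lra.
  - rewrite Rminus_0_r.
    apply Rle_trans with (e1 * Rabs h * B * T).
    + apply Rmult_le_compat_l; auto.
      apply Rmult_le_pos; [apply Rmult_le_pos; [lra | apply Rabs_pos] | lra].
    + right; unfold e1; field; lra.
Qed.

(* With [t] frozen in the kernel, only the dependence of [phi (y - s)] on [y]
   remains to be differentiated. *)
Lemma derivable_pt_lim_convolution_kernel t :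
  derivable_pt_lim (fun y => integral (fun s => (phi (y - s) - phi (t - s)) * psi s) 0 y) t
    (integral (fun s => dphi (t - s) * psi s) 0 t).
Proof.
  intros eps Heps.
  set (Phi := fun y => integral (fun s => dphi (t - s) * psi s) 0 y).
  destruct (convolution_kernel_remainder t (eps / 2)) as [d1 [Hd1 HRem]]; [lra|].
  destruct (continuity_pt_close Phi t (eps / 2)) as [d2 [Hd2 HPhi]]; [|lra|].
  { apply continuity_integral; continuity_tac. }
  exists (mkposreal _ (Rmin_pos _ _ Hd1 Hd2)). intros h Hh0 Hh. simpl in Hh.
  specialize (HRem h (Rlt_le_trans _ _ _ Hh (Rmin_l _ _))).
  specialize (HPhi (t + h) ltac:(rewrite Rplus_minus_l; exact (Rlt_le_trans _ _ _ Hh (Rmin_r _ _)))).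
  set (Rem := integral (fun s => (phi (t + h - s) - phi (t - s) - h * dphi (t - s)) * psi s)
                0 (t + h)) in HRem.
  assert (Hsplit : integral (fun s => (phi (t + h - s) - phi (t - s)) * psi s) 0 (t + h)
                   = Rem + h * Phi (t + h)).
  { unfold Rem, Phi. rewrite <- integral_plus_scal by continuity_tac.
    apply integral_ext; intro; ring. }
  assert (Hzero : integral (fun s => (phi (t - s) - phi (t - s)) * psi s) 0 t = 0).
  { rewrite (integral_ext _ (fun _ => 0)) by (intro; ring). rewrite integral_const; ring. }
  rewrite Hzero, Rminus_0_r, Hsplit.
  replace ((Rem + h * Phi (t + h)) / h - Phi t) with (Rem / h + (Phi (t + h) - Phi t))
    by (field; auto).
  eapply Rle_lt_trans; [apply Rabs_triang|].
  assert (Rabs (Rem / h) <= eps / 2).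
  { assert (Hha : 0 < Rabs h) by (apply Rabs_pos_lt; auto).
    unfold Rdiv; rewrite Rabs_mult, Rabs_inv.
    apply Rmult_le_reg_r with (Rabs h); auto.
    rewrite Rmult_assoc, Rinv_l, Rmult_1_r by lra. exact HRem. }
  lra.
Qed.

Lemma derivable_pt_lim_convolution t :
  derivable_pt_lim (fun y => integral (fun s => phi (y - s) * psi s) 0 y) t
    (phi 0 * psi t + integral (fun s => dphi (t - s) * psi s) 0 t).
Proof.
  apply (derivable_pt_lim_ext
    (fun y => integral (fun s => phi (t - s) * psi s) 0 y
            + integral (fun s => (phi (y - s) - phi (t - s)) * psi s) 0 y)).
  { intro y. rewrite <- (Rmult_1_l (integral (fun s => (phi (y - s) - _) * _) 0 y)).
    rewrite <- integral_plus_scal by continuity_tac. apply integral_ext; intro; ring. }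
  apply derivable_pt_lim_plus.
  - replace (phi 0) with (phi (t - t)) by (f_equal; ring).
    apply (derivable_pt_lim_integral (fun s => phi (t - s) * psi s)). continuity_tac.
  - apply derivable_pt_lim_convolution_kernel.
Qed.

End ConvolutionDerivative.

(** * Limits at infinity *)

Lemma tends_at_infty_unique f l1 l2 :
  tends_at_infty f l1 -> tends_at_infty f l2 -> l1 = l2.
Proof.
  intros H1 H2. apply Rminus_diag_uniq.
  enough (H : Rabs (l1 - l2) <= 0) by (revert H; unfold Rabs; destruct Rcase_abs; lra).
  apply le_epsilon. intros e He. rewrite Rplus_0_l.
  destruct (H1 (e / 2) ltac:(lra)) as [M1 HM1]. destruct (H2 (e / 2) ltac:(lra)) as [M2 HM2].
  specialize (HM1 (Rmax M1 M2) (Rmax_l _ _)). specialize (HM2 (Rmax M1 M2) (Rmax_r _ _)).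
  replace (l1 - l2) with (- (f (Rmax M1 M2) - l1) + (f (Rmax M1 M2) - l2)) by ring.
  eapply Rle_trans; [apply Rabs_triang|]. rewrite Rabs_Ropp. lra.
Qed.

Lemma tends_at_infty_squeeze f l :
  (forall d, 0 < d -> exists T, forall t, T <= t -> f t <= l + d) ->
  (forall d, 0 < d -> exists T, forall t, T <= t -> l - d <= f t) ->
  tends_at_infty f l.
Proof.
  intros Hup Hlow eps Heps.
  destruct (Hup (eps / 2) ltac:(lra)) as [T1 HT1].
  destruct (Hlow (eps / 2) ltac:(lra)) as [T2 HT2].
  exists (Rmax T1 T2). intros t Ht.
  specialize (HT1 t ltac:(eapply Rle_trans; [apply Rmax_l | exact Ht])).
  specialize (HT2 t ltac:(eapply Rle_trans; [apply Rmax_r | exact Ht])).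
  apply Rabs_def1; lra.
Qed.

Lemma nondecreasing_bounded_tends F C :
  (forall u v, 0 <= u -> u <= v -> F u <= F v) -> (forall S, 0 <= S -> F S <= C) ->
  exists l, (forall S, 0 <= S -> F S <= l) /\ tends_at_infty F l.
Proof.
  intros Hmono HC.
  set (E := fun x => exists S, 0 <= S /\ x = F S).
  assert (Hb : bound E) by (exists C; intros x [S [HS ->]]; auto).
  assert (Hn : exists x, E x) by (exists (F 0), 0; split; [lra | auto]).
  destruct (completeness E Hb Hn) as [l [Hub Hlub]].
  assert (Hle : forall S, 0 <= S -> F S <= l) by (intros S HS; apply Hub; exists S; auto).
  exists l. split; auto. intros eps Heps.
  assert (NU : ~ is_upper_bound E (l - eps)) by (intro H; specialize (Hlub _ H); lra).
  apply not_all_ex_not in NU. destruct NU as [x Hx]. apply imply_to_and in Hx.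
  destruct Hx as [[S [HS ->]] Hx].
  exists S. intros t Ht. specialize (Hmono S t HS Ht). specialize (Hle t ltac:(lra)).
  apply Rabs_def1; lra.
Qed.

Lemma bounded_limsup f B : (forall t, 0 <= t -> Rabs (f t) <= B) ->
  exists M, - B <= M <= B /\
  (forall e, 0 < e -> exists T, 0 <= T /\ forall t, T <= t -> f t < M + e) /\
  (forall e, 0 < e -> forall T, exists t, T <= t /\ 0 <= t /\ M - e < f t).
Proof.
  intros Hf.
  assert (Hlate : forall T, exists t, T <= t /\ 0 <= t /\ - B <= f t).
  { intros T. exists (Rmax T 0). split; [apply Rmax_l | split; [apply Rmax_r|]].
    apply (Rabs_le_between _ _ (Hf _ (Rmax_r _ _))). }
  set (Freq := fun x => forall T, exists t, T <= t /\ 0 <= t /\ x <= f t).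
  assert (Hub : is_upper_bound Freq B).
  { intros x Hx. destruct (Hx 0) as [t [_ [Ht Hxt]]].
    generalize (Rabs_le_between _ _ (Hf t Ht)); lra. }
  destruct (completeness Freq (ex_intro _ B Hub) (ex_intro _ (- B) Hlate)) as [M [HM1 HM2]].
  exists M. split; [split|split].
  - apply HM1; exact Hlate.
  - apply HM2, Hub.
  - intros e He. assert (NS : ~ Freq (M + e)) by (intro H; specialize (HM1 _ H); lra).
    apply not_all_ex_not in NS. destruct NS as [T HT].
    exists (Rmax T 0). split; [apply Rmax_r|]. intros t Ht.
    apply Rnot_le_lt. intro C. apply HT. exists t.
    split; [|split]; [eapply Rle_trans; [apply Rmax_l|exact Ht]
                     | eapply Rle_trans; [apply Rmax_r|exact Ht] | exact C].
  - intros e He T.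
    assert (NU : ~ is_upper_bound Freq (M - e)) by (intro H; specialize (HM2 _ H); lra).
    apply not_all_ex_not in NU. destruct NU as [x Hx].
    apply imply_to_and in Hx. destruct Hx as [Fx Hx].
    destruct (Fx T) as [t [? [? ?]]]. exists t. repeat split; auto. lra.
Qed.

Lemma pow2_unbounded t S : 0 < t -> exists n, S <= 2 ^ n * t.
Proof.
  intros Ht. destruct (INR_unbounded (S / t)) as [n Hn]. exists n.
  assert (Hn2 : INR n <= 2 ^ n).
  { clear Hn. induction n as [|n IH]; [simpl; lra|].
    rewrite S_INR. simpl. pose proof (pow_R1_Rle 2 n ltac:(lra)). lra. }
  apply Rle_trans with (S / t * t); [right; field; lra|].
  apply Rmult_le_compat_r; lra.
Qed.

Section NonincreasingTail.
Variable lam : R -> R.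
Hypotheses (Hlam : continuity lam)
  (Hlam_nonneg : forall u, 0 <= u -> 0 <= lam u)
  (Hlam_decr : forall u v, 0 <= u -> u <= v -> lam v <= lam u).

Lemma integral_nonincreasing_le u v : 0 <= u -> u <= v ->
  integral lam u v <= lam u * (v - u).
Proof.
  intros Hu Huv. rewrite <- integral_const.
  apply integral_le; auto; [continuity_tac|]. intros; apply Hlam_decr; lra.
Qed.

Lemma integral_nonneg_mono u v : 0 <= u -> u <= v -> integral lam 0 u <= integral lam 0 v.
Proof.
  intros Hu Huv. rewrite <- (integral_Chasles lam Hlam 0 u v).
  assert (0 <= integral lam u v) by (apply integral_ge0; auto; intros; apply Hlam_nonneg; lra).
  lra.
Qed.

(* Decay faster than [1/t] on dyadic scales: the integrals over [2^n t1, 2^(n+1) t1]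
   are dominated by the geometric series [t1 lam(t1) (2q)^n]. *)
Lemma doubling_integral_bounded t1 q : 0 < t1 -> 0 < q < / 2 ->
  (forall t, t1 <= t -> lam (2 * t) <= q * lam t) ->
  exists C, forall S, 0 <= S -> integral lam 0 S <= C.
Proof.
  intros Ht1 Hq Hr. set (x := 2 * q).
  assert (Hx : 0 < x < 1) by (unfold x; lra).
  assert (Hlt1 := Hlam_nonneg t1 ltac:(lra)).
  assert (P : forall n, integral lam 0 (2 ^ n * t1)
                          <= integral lam 0 t1 + t1 * lam t1 * ((1 - x ^ n) / (1 - x))
                        /\ lam (2 ^ n * t1) <= q ^ n * lam t1).
  { induction n as [|n [IH1 IH2]].
    - simpl. rewrite Rmult_1_l. split; [|lra].
      replace ((1 - 1) / (1 - x)) with 0 by (field; lra). lra.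
    - assert (H2n : 1 <= 2 ^ n) by (apply pow_R1_Rle; lra).
      assert (Hu : t1 <= 2 ^ n * t1) by nra.
      replace (2 ^ S n * t1) with (2 * (2 ^ n * t1)) by (simpl; ring).
      split.
      + rewrite <- (integral_Chasles lam Hlam 0 (2 ^ n * t1) (2 * (2 ^ n * t1))).
        pose proof (integral_nonincreasing_le (2 ^ n * t1) (2 * (2 ^ n * t1))
                      ltac:(lra) ltac:(lra)).
        assert (lam (2 ^ n * t1) * (2 * (2 ^ n * t1) - 2 ^ n * t1) <= t1 * lam t1 * x ^ n).
        { unfold x. rewrite Rpow_mult_distr.
          replace (2 * (2 ^ n * t1) - 2 ^ n * t1) with (2 ^ n * t1) by ring.
          apply Rle_trans with (q ^ n * lam t1 * (2 ^ n * t1)).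
          - apply Rmult_le_compat_r; lra.
          - right; ring. }
        assert (E : (1 - x ^ n) / (1 - x) + x ^ n = (1 - x ^ S n) / (1 - x))
          by (simpl; field; lra).
        rewrite <- E. nra.
      + eapply Rle_trans; [apply Hr; lra|]. simpl.
        pose proof (pow_le q n ltac:(lra)). nra. }
  exists (integral lam 0 t1 + t1 * lam t1 / (1 - x)). intros S HS.
  destruct (pow2_unbounded t1 S Ht1) as [n Hn].
  destruct (P n) as [P1 _].
  eapply Rle_trans; [apply integral_nonneg_mono; eauto|]. eapply Rle_trans; [exact P1|].
  apply Rplus_le_compat_l. unfold Rdiv.
  assert (0 <= t1 * lam t1 * / (1 - x) * x ^ n).
  { repeat apply Rmult_le_pos; try lra.
    - left; apply Rinv_0_lt_compat; lra.
    - apply pow_le; lra. }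
  assert (0 < / (1 - x)) by (apply Rinv_0_lt_compat; lra).
  nra.
Qed.

Lemma integrable_nonincreasing_mul_tends m :
  tends_at_infty (fun S => integral lam 0 S) m -> tends_at_infty (fun T => T * lam T) 0.
Proof.
  intros Hm eps Heps. destruct (Hm (eps / 4) ltac:(lra)) as [S0 HS0].
  exists (Rmax 0 (2 * S0)). intros T HT.
  assert (HT0 : 0 <= T) by (eapply Rle_trans; [apply Rmax_l|exact HT]).
  assert (HT1 : 2 * S0 <= T) by (eapply Rle_trans; [apply Rmax_r|exact HT]).
  pose proof (HS0 (T / 2) ltac:(lra)) as A1. pose proof (HS0 T ltac:(lra)) as A2.
  apply Rabs_lt_between in A1, A2.
  assert (Hhalf : lam T * (T - T / 2) <= integral lam (T / 2) T).
  { rewrite <- integral_const. apply integral_le; [continuity_tac | auto | lra |].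
    intros; apply Hlam_decr; lra. }
  rewrite <- (integral_Chasles lam Hlam 0 (T / 2) T) in A2.
  pose proof (Hlam_nonneg T HT0).
  rewrite Rminus_0_r, Rabs_right by nra. nra.
Qed.

End NonincreasingTail.

Lemma slowly_varying_doubling L alpha : slowly_varying L -> 1 < alpha ->
  exists t1 q, 1 <= t1 /\ 0 < q < / 2 /\ forall t, t1 <= t ->
    L (2 * t) * Rpower (2 * t) (- alpha) <= q * (L t * Rpower t (- alpha)).
Proof.
  intros [HLpos HLv] Hal.
  set (p := Rpower 2 (- alpha)).
  assert (Hp0 : 0 < p) by (unfold p, Rpower; apply exp_pos).
  assert (Hp : p < / 2).
  { unfold p. replace (/ 2) with (Rpower 2 (- (1))).
    - apply Rpower_lt; lra.
    - rewrite Rpower_Ropp, Rpower_1; lra. }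
  set (q := (p + / 2) / 2).
  assert (Hqp : 0 < q / p - 1).
  { apply Rlt_0_minus. apply Rmult_lt_reg_r with p; auto.
    unfold Rdiv. rewrite Rmult_assoc, Rinv_l, Rmult_1_r by lra. unfold q; lra. }
  destruct (HLv 2 ltac:(lra) (q / p - 1) Hqp) as [t0 Ht0].
  exists (Rmax 1 t0), q. split; [apply Rmax_l|]. split; [unfold q; lra|].
  intros t Ht. assert (Ht1 : 1 <= t) by (eapply Rle_trans; [apply Rmax_l|exact Ht]).
  specialize (Ht0 t ltac:(eapply Rle_trans; [apply Rmax_r|exact Ht])).
  apply Rabs_lt_between in Ht0.
  assert (HLt : 0 < L t) by (apply HLpos; lra).
  assert (HL2 : L (2 * t) < (q / p) * L t).
  { apply Rmult_lt_reg_r with (/ L t); [apply Rinv_0_lt_compat; auto|].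
    rewrite Rmult_assoc, Rinv_r, Rmult_1_r by lra. unfold Rdiv in Ht0 at 1. lra. }
  rewrite <- (Rpower_mult_distr 2 t) by lra. fold p.
  assert (0 < Rpower t (- alpha)) by (unfold Rpower; apply exp_pos).
  replace (q * (L t * Rpower t (- alpha))) with ((q / p) * L t * (p * Rpower t (- alpha)))
    by (field; lra).
  left. apply Rmult_lt_compat_r; [nra | auto].
Qed.

(** * The Tauberian argument *)

Lemma integral_convolution_abs_le f w t a b R : continuity f -> continuity w -> a <= b ->
  (forall s, a <= s <= b -> 0 <= f (t - s)) -> (forall s, a <= s <= b -> Rabs (w s) <= R) ->
  Rabs (integral (fun s => f (t - s) * w s) a b) <= R * integral f (t - b) (t - a).
Proof.
  intros Hf Hw Hab Hfpos HwR.
  rewrite <- integral_reflect, <- integral_scal by continuity_tac.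
  apply integral_abs_le; auto; [continuity_tac | continuity_tac |].
  intros s Hs. rewrite Rabs_mult, Rmult_comm, (Rabs_right (f (t - s))) by (apply Rle_ge; auto).
  apply Rmult_le_compat_r; auto.
Qed.

(* [w] will be [r] with [A = 1], or [-r] with [A = -1]. *)
Section Tauberian.
Variables (k lam w : R -> R) (K m A : R).
Let Lam S := integral lam 0 S.
Let dw t := - K * w t + integral (fun s => k (t - s) * w s) 0 t.
Hypotheses (Hk : continuity k) (Hlam : continuity lam) (Hw : continuity w)
  (HK : 0 < K) (Hm : 0 <= m)
  (Hk_pos : forall s, 0 <= s -> 0 < k s)
  (Hlam_bounds : forall u, 0 <= u -> 0 <= lam u <= K)
  (Hk_integral : forall S, 0 <= S -> integral k 0 S = K - lam S)
  (Hlam_tends : tends_at_infty lam 0)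
  (HLam_le : forall S, 0 <= S -> Lam S <= m)
  (HLam_tends : tends_at_infty Lam m)
  (Hw_bound : forall t, 0 <= t -> Rabs (w t) <= 1)
  (Hw_integrated : forall t, 0 <= t -> w t + integral (fun s => lam (t - s) * w s) 0 t = A)
  (Hw_deriv : forall t, 0 < t -> derivable_pt_lim w t (dw t)).

Lemma convolution_k_tail_abs_le t S : 0 <= S <= t ->
  Rabs (integral (fun s => k (t - s) * w s) 0 (t - S)) <= lam S - lam t.
Proof.
  intros HS. eapply Rle_trans.
  - apply integral_convolution_abs_le; auto; [lra | |].
    + intros; left; apply Hk_pos; lra.
    + intros; apply Hw_bound; lra.
  - replace (t - (t - S)) with S by ring. rewrite Rminus_0_r, Rmult_1_l.
    replace (integral k S t) with (integral k 0 t - integral k 0 S)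
      by (rewrite <- (integral_Chasles k Hk 0 S t); ring).
    rewrite !Hk_integral by lra. lra.
Qed.

Lemma dw_abs_le t : 0 <= t -> Rabs (dw t) <= 2 * K.
Proof.
  intros Ht. unfold dw. eapply Rle_trans; [apply Rabs_triang|].
  rewrite Rabs_mult, Rabs_Ropp, (Rabs_right K) by lra.
  pose proof (convolution_k_tail_abs_le t 0 ltac:(lra)) as Hc.
  rewrite Rminus_0_r in Hc.
  pose proof (Hw_bound t Ht). pose proof (Hlam_bounds 0 ltac:(lra)).
  pose proof (Hlam_bounds t Ht). nra.
Qed.

Lemma w_lipschitz x y : 0 < x -> x <= y -> Rabs (w y - w x) <= 2 * K * (y - x).
Proof.
  intros Hx [Hxy| ->]; [|rewrite Rminus_diag, Rabs_R0; lra].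
  destruct (MVT_cor2 w dw x y Hxy) as [c [E Hc]]; [intros c Hc; apply Hw_deriv; lra|].
  rewrite E, Rabs_mult, (Rabs_right (y - x)) by lra.
  apply Rmult_le_compat_r; [lra | apply dw_abs_le; lra].
Qed.

Lemma almost_maximal_point M e h t0 : 0 < h < t0 ->
  w (t0 - h) < M + e -> M - e < w t0 ->
  exists t, t0 - h <= t <= t0 /\ - (2 * e / h) <= dw t /\ M - e - 2 * K * h <= w t.
Proof.
  intros Hh Hup Hlow.
  destruct (MVT_cor2 w dw (t0 - h) t0) as [t [E Ht]]; [lra | intros; apply Hw_deriv; lra |].
  exists t. split; [lra | split].
  - replace (t0 - (t0 - h)) with h in E by ring.
    apply Rmult_le_reg_r with h; [lra|].
    replace (- (2 * e / h) * h) with (- (2 * e)) by (field; lra). lra.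
  - pose proof (w_lipschitz t t0 ltac:(lra) ltac:(lra)) as Hl.
    apply Rabs_le_between in Hl. nra.
Qed.

(* On the window the deficit [M + e - w] is nonnegative, so the convolution in
   [dw t] falls short of [(M + e) K] by at least [kap] times its integral. *)
Lemma window_deficit_bound M e kap S S' t : -1 <= M -> 0 < e -> 0 <= S <= S' -> S' <= t ->
  (forall u, 0 <= u <= S -> kap <= k u) ->
  (forall s, t - S' <= s <= t -> w s < M + e) ->
  kap * integral (fun s => M + e - w s) (t - S) t
    <= (M + e) * K - K * w t - dw t + 2 * lam S'.
Proof.
  intros HM He HS HS't Hkap Hwin.
  set (g := fun s => k (t - s) * (M + e - w s)).
  assert (Hg : continuity g) by (unfold g; continuity_tac).
  assert (Hkap_k : kap * integral (fun s => M + e - w s) (t - S) t <= integral g (t - S) t).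
  { rewrite <- integral_scal by continuity_tac. apply integral_le; [continuity_tac | auto | lra |].
    intros s Hs. unfold g. assert (kap <= k (t - s)) by (apply Hkap; lra).
    assert (w s < M + e) by (apply Hwin; lra). nra. }
  assert (Hg_pos : 0 <= integral g (t - S') (t - S)).
  { apply integral_ge0; auto; [lra|]. intros s Hs. unfold g.
    assert (0 < k (t - s)) by (apply Hk_pos; lra). assert (w s < M + e) by (apply Hwin; lra).
    nra. }
  assert (Hg_int : integral g (t - S') t
                   = (M + e) * (K - lam S') - integral (fun s => k (t - s) * w s) (t - S') t).
  { unfold g. rewrite (integral_ext _ (fun s => (M + e) * k (t - s) - k (t - s) * w s))
      by (intro; ring).
    rewrite integral_minus, integral_scal, integral_reflect by continuity_tac.
    rewrite Rminus_diag. replace (t - (t - S')) with S' by ring. rewrite Hk_integral; lra. }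
  assert (Htail := convolution_k_tail_abs_le t S' ltac:(lra)).
  apply Rabs_le_between in Htail.
  rewrite <- (integral_Chasles g Hg (t - S') (t - S) t) in Hg_int.
  unfold dw. rewrite <- (integral_Chasles (fun s => k (t - s) * w s) ltac:(continuity_tac)
                          0 (t - S') t).
  pose proof (Hlam_bounds S' ltac:(lra)). pose proof (Hlam_bounds t ltac:(lra)).
  assert (- (M + e) * lam S' <= lam S') by nra.
  lra.
Qed.

Lemma integrated_window_lower M e S t : -1 <= M <= 1 -> 0 < e -> 0 <= S <= t ->
  (forall s, t - S <= s <= t -> w s < M + e) ->
  w t + M * m - 2 * (m - Lam S) - K * integral (fun s => M + e - w s) (t - S) t <= A.
Proof.
  intros HM He HS Hwin.
  set (conv := fun s => lam (t - s) * w s).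
  assert (Hconv : continuity conv) by (unfold conv; continuity_tac).
  assert (Htail : Rabs (integral conv 0 (t - S)) <= m - Lam S).
  { eapply Rle_trans.
    - apply integral_convolution_abs_le; auto; [lra | |].
      + intros; apply Hlam_bounds; lra.
      + intros; apply Hw_bound; lra.
    - replace (t - (t - S)) with S by ring. rewrite Rminus_0_r, Rmult_1_l.
      replace (integral lam S t) with (Lam t - Lam S)
        by (unfold Lam; rewrite <- (integral_Chasles lam Hlam 0 S t); ring).
      pose proof (HLam_le t ltac:(lra)). lra. }
  assert (Hwindow : integral conv (t - S) t
                    = (M + e) * Lam S - integral (fun s => lam (t - s) * (M + e - w s)) (t - S) t).
  { unfold conv. rewrite <- (integral_ext (fun s => (M + e) * lam (t - s)
                                         - lam (t - s) * (M + e - w s))) by (intro; ring).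
    rewrite integral_minus, integral_scal, integral_reflect by continuity_tac.
    rewrite Rminus_diag. replace (t - (t - S)) with S by ring. reflexivity. }
  assert (Hdeficit : integral (fun s => lam (t - s) * (M + e - w s)) (t - S) t
                     <= K * integral (fun s => M + e - w s) (t - S) t).
  { rewrite <- integral_scal by continuity_tac.
    apply integral_le; [continuity_tac | continuity_tac | lra |].
    intros s Hs. pose proof (Hlam_bounds (t - s) ltac:(lra)).
    assert (w s < M + e) by (apply Hwin; lra). nra. }
  rewrite <- (Hw_integrated t) by lra. fold conv.
  rewrite <- (integral_Chasles conv Hconv 0 (t - S) t), Hwindow.
  apply Rabs_le_between in Htail.
  assert (Hlm : Lam S <= m) by (apply HLam_le; lra).
  assert (HLam0 : 0 <= Lam S)
    by (apply integral_ge0; auto; [lra | intros; apply Hlam_bounds; lra]).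
  assert (M * (m - Lam S) <= m - Lam S) by nra.
  assert (0 <= e * Lam S) by nra.
  lra.
Qed.

Lemma limsup_error_bound M e h kap S S' t : -1 <= M <= 1 -> 0 < e -> 0 < h -> 0 < kap ->
  0 <= S <= S' -> S' <= t ->
  (forall u, 0 <= u <= S -> kap <= k u) ->
  (forall s, t - S' <= s <= t -> w s < M + e) ->
  - (2 * e / h) <= dw t -> M - e - 2 * K * h <= w t ->
  kap * (M * (1 + m) - A)
    <= kap * (2 * (m - Lam S) + e + 2 * K * h)
       + K * (2 * K * e + 2 * e / h + 2 * K * K * h + 2 * lam S').
Proof.
  intros HM He Hh Hkap HS HS't Hkap_k Hwin Hdw Hwt.
  pose proof (window_deficit_bound M e kap S S' t ltac:(lra) He HS HS't Hkap_k Hwin) as Hdef.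
  pose proof (integrated_window_lower M e S t HM He ltac:(lra)
                ltac:(intros; apply Hwin; lra)) as Hlow.
  set (E := integral (fun s => M + e - w s) (t - S) t) in Hdef, Hlow.
  assert (HkapE : kap * E <= 2 * K * e + 2 * e / h + 2 * K * K * h + 2 * lam S') by nra.
  assert (kap * (K * E) <= K * (2 * K * e + 2 * e / h + 2 * K * K * h + 2 * lam S')) by nra.
  nra.
Qed.

Lemma limsup_mul_le M : -1 <= M <= 1 ->
  (forall e, 0 < e -> exists T, 0 <= T /\ forall t, T <= t -> w t < M + e) ->
  (forall e, 0 < e -> forall T, exists t, T <= t /\ 0 <= t /\ M - e < w t) ->
  M * (1 + m) <= A.
Proof.
  intros HM Hsup Hfreq. apply Rle_plus_epsilon. intros eta Heta.
  (* [S], [S'], [h] and [e] are chosen so that each of the four error terms of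
     [limsup_error_bound] is at most [kap * eta / 4]. *)
  destruct (HLam_tends (eta / 8) ltac:(lra)) as [S0 HS0].
  set (S := Rmax 1 S0).
  assert (HS : 1 <= S) by apply Rmax_l.
  assert (HLamS : m - Lam S <= eta / 8).
  { specialize (HS0 S (Rmax_r _ _)). apply Rabs_lt_between in HS0. lra. }
  destruct (continuity_ab_min k 0 S) as [umin [Hmin Humin]]; [lra | intros; apply Hk |].
  set (kap := k umin).
  assert (Hkap : 0 < kap) by (apply Hk_pos; lra).
  destruct (Hlam_tends (kap * eta / (8 * K))) as [S1 HS1]; [apply Rdiv_lt_0_compat; nra|].
  set (S' := Rmax S S1).
  assert (HSS' : S <= S') by apply Rmax_l.
  assert (HlamS' : 2 * K * lam S' <= kap * eta / 4).
  { specialize (HS1 S' (Rmax_r _ _)). rewrite Rminus_0_r in HS1.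
    apply Rabs_lt_between in HS1.
    replace (kap * eta / 4) with (2 * K * (kap * eta / (8 * K))) by (field; lra). nra. }
  set (h := kap * eta / (8 * (kap * K + K * K * K))).
  assert (HK3 : 0 < kap * K + K * K * K)
    by (assert (0 < K * K * K) by (repeat apply Rmult_lt_0_compat; lra); nra).
  assert (Hh : 0 < h) by (apply Rdiv_lt_0_compat; nra).
  assert (Hh_choice : 2 * h * (kap * K + K * K * K) = kap * eta / 4) by (unfold h; field; lra).
  set (Q := kap + 2 * K * K + 2 * K / h).
  assert (HQ : 0 < Q) by (unfold Q; assert (0 < 2 * K / h) by (apply Rdiv_lt_0_compat; lra); nra).
  set (e := kap * eta / (4 * Q)).
  assert (He : 0 < e) by (apply Rdiv_lt_0_compat; nra).
  assert (He_choice : e * Q = kap * eta / 4) by (unfold e; field; lra).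
  destruct (Hsup e He) as [T [HT0 HT]].
  destruct (Hfreq e He (T + S' + h + 1)) as [t0 [Ht0 [_ Hwt0]]].
  destruct (almost_maximal_point M e h t0 ltac:(lra) ltac:(apply HT; lra) Hwt0)
    as [t [Ht [Hdw Hwt]]].
  pose proof (limsup_error_bound M e h kap S S' t HM He Hh Hkap
                ltac:(lra) ltac:(lra)
                ltac:(intros; apply Hmin; lra) ltac:(intros; apply HT; lra) Hdw Hwt) as Herr.
  assert (Hsum : kap * (2 * (m - Lam S) + e + 2 * K * h)
                 + K * (2 * K * e + 2 * e / h + 2 * K * K * h + 2 * lam S')
                 = 2 * kap * (m - Lam S) + e * Q + 2 * h * (kap * K + K * K * K)
                   + 2 * K * lam S') by (unfold Q; field; lra).
  apply Rmult_le_reg_l with kap; [exact Hkap|]. nra.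
Qed.


Lemma eventually_le : forall d, 0 < d ->
  exists T, forall t, T <= t -> w t <= A / (1 + m) + d.
Proof.
  intros d Hd.
  destruct (bounded_limsup w 1 Hw_bound) as [M [HM [Hsup Hfreq]]].
  pose proof (limsup_mul_le M HM Hsup Hfreq) as HMA.
  assert (HMc : M <= A / (1 + m)).
  { apply Rmult_le_reg_r with (1 + m); [lra|].
    unfold Rdiv; rewrite Rmult_assoc, Rinv_l by lra. lra. }
  destruct (Hsup d Hd) as [T [_ HT]]. exists T. intros t Ht. specialize (HT t Ht). lra.
Qed.

End Tauberian.

(** * The resolvent *)

Lemma derivable_pt_lim_locally_eq f g x l d : 0 < d ->
  (forall y, Rabs (y - x) < d -> f y = g y) ->
  derivable_pt_lim f x l -> derivable_pt_lim g x l.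
Proof.
  intros Hd Heq H eps Heps. destruct (H eps Heps) as [d1 Hd1].
  assert (Hm : 0 < Rmin d d1) by (apply Rmin_pos; [lra | apply cond_pos]).
  exists (mkposreal _ Hm). intros h Hh0 Hh. simpl in Hh.
  rewrite <- !Heq.
  - apply Hd1; auto. eapply Rlt_le_trans; [exact Hh | apply Rmin_r].
  - rewrite Rminus_diag, Rabs_R0; lra.
  - replace (x + h - x) with h by ring. eapply Rlt_le_trans; [exact Hh | apply Rmin_l].
Qed.

Lemma derivable_pt_lim_sign_left f x d c : derivable_pt_lim f x d -> d <> 0 -> 0 < c ->
  exists h, 0 < h < c /\ (f (x - h) - f x) * d < 0.
Proof.
  intros H Hd Hc.
  assert (Hda : 0 < Rabs d / 2) by (apply Rdiv_lt_0_compat; [apply Rabs_pos_lt; auto | lra]).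
  destruct (H _ Hda) as [del Hdel].
  set (h := Rmin c del / 2).
  assert (Hh : 0 < h)
    by (unfold h; apply Rdiv_lt_0_compat; [apply Rmin_pos; [lra | apply cond_pos] | lra]).
  assert (Hhc : h < c) by (unfold h; pose proof (Rmin_l c del); lra).
  assert (Hhd : h < del) by (unfold h; pose proof (Rmin_r c del); pose proof (cond_pos del); lra).
  exists h. split; [lra|].
  specialize (Hdel (- h) ltac:(lra)). rewrite Rabs_Ropp, (Rabs_right h) in Hdel by lra.
  specialize (Hdel Hhd). replace (x + - h) with (x - h) in Hdel by ring.
  apply Rabs_lt_between in Hdel.
  set (q := (f (x - h) - f x) / - h) in Hdel.
  assert (E : f (x - h) - f x = - h * q) by (unfold q; field; lra).
  rewrite E. assert (0 < q * d) by (unfold Rabs in Hdel; destruct (Rcase_abs d); nra).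
  nra.
Qed.

(* Functions given on [0, +oo) are extended to [R] by their value at [0], which
   makes them continuous on [R] and lets the [integral] calculus apply. *)
Definition extend_nonneg (f : R -> R) (x : R) : R := f (Rmax 0 x).

Lemma continuity_extend_nonneg f : continuous_on_nonneg f -> continuity (extend_nonneg f).
Proof.
  intros Hf x eps Heps.
  destruct (Hf (Rmax 0 x) (Rmax_l _ _) eps Heps) as [d [Hd H]].
  exists d. split; [exact Hd|]. intros y [_ Hy].
  apply H. split; [apply Rmax_l|]. simpl in *. unfold Rdist in *.
  eapply Rle_lt_trans; [|exact Hy].
  unfold Rmax; destruct (Rle_dec 0 y); destruct (Rle_dec 0 x); apply Rabs_le;
    unfold Rabs; destruct (Rcase_abs (y - x)); lra.
Qed.

Lemma extend_nonneg_eq f x : 0 <= x -> extend_nonneg f x = f x.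
Proof. intros; unfold extend_nonneg; rewrite Rmax_right; auto. Qed.

(* [tail k K u] is [lambda(u) = \int_u^oo k] once [K = \int_0^oo k]. *)
Definition tail (k : R -> R) (K u : R) : R := K - integral (extend_nonneg k) 0 u.

Section Resolvent.
Variables (k L r : R -> R) (alpha a : R).
Hypotheses (Hk_cont : continuous_on_nonneg k) (Hk_pos : forall t, 0 <= t -> 0 < k t)
  (Hk_int : improper_int k 0 (- a)) (Halpha : 1 < alpha) (HL : slowly_varying L)
  (Hk_tail : forall t, 0 < t -> improper_int k t (L t * Rpower t (- alpha)))
  (Hr_cont : continuous_on_nonneg r) (Hr0 : r 0 = 1)
  (Hr_deriv : forall t, 0 < t -> exists v,
      RInt_eq (fun s => k (t - s) * r s) 0 t v /\ derivable_pt_lim r t (a * r t + v)).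

Local Notation K := (- a).
Local Notation k0 := (extend_nonneg k).
Local Notation r0 := (extend_nonneg r).
Local Notation lam := (tail k (- a)).

Let Hk0 : continuity k0. Proof. apply continuity_extend_nonneg; auto. Qed.
Let Hr0_cont : continuity r0. Proof. apply continuity_extend_nonneg; auto. Qed.
Let Hlam : continuity lam.
Proof. unfold tail. continuity_tac. apply continuity_integral; auto. Qed.
Let Hk0_pos x : 0 <= x -> 0 < k0 x.
Proof. intros; rewrite extend_nonneg_eq; auto. Qed.

Lemma integral_k0_tends : tends_at_infty (fun T => integral k0 0 T) K.
Proof.
  intros eps Heps. destruct Hk_int as [_ H2]. destruct (H2 eps Heps) as [M HM].
  exists (Rmax M 0). intros t Ht.
  apply (HM t); [eapply Rle_trans; [apply Rmax_l | exact Ht]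
               | eapply Rle_trans; [apply Rmax_r | exact Ht] |].
  apply integral_RInt_eq; auto; [eapply Rle_trans; [apply Rmax_r | exact Ht] |].
  intros; symmetry; apply extend_nonneg_eq; lra.
Qed.

Lemma tail_tends : tends_at_infty lam 0.
Proof.
  intros eps Heps. destruct (integral_k0_tends eps Heps) as [M HM]. exists M.
  intros t Ht. unfold tail. rewrite Rminus_0_r, <- Rabs_Ropp.
  replace (- (K - integral k0 0 t)) with (integral k0 0 t - K) by ring. auto.
Qed.

Lemma tail_regular_variation t : 0 < t -> lam t = L t * Rpower t (- alpha).
Proof.
  intros Ht. apply (tends_at_infty_unique (fun T => integral k0 0 T - integral k0 0 t)).
  - intros eps Heps. destruct (integral_k0_tends eps Heps) as [M HM]. exists M. intros T HT.
    unfold tail. replace (integral k0 0 T - integral k0 0 t - (K - integral k0 0 t))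
      with (integral k0 0 T - K) by ring. auto.
  - intros eps Heps. destruct (Hk_tail t Ht) as [_ H2]. destruct (H2 eps Heps) as [M HM].
    exists (Rmax M t). intros T HT.
    replace (integral k0 0 T - integral k0 0 t) with (integral k0 t T)
      by (rewrite <- (integral_Chasles k0 Hk0 0 t T); ring).
    apply (HM T); [eapply Rle_trans; [apply Rmax_l | exact HT]
                 | eapply Rle_trans; [apply Rmax_r | exact HT] |].
    apply integral_RInt_eq; auto; [eapply Rle_trans; [apply Rmax_r | exact HT] |].
    intros; symmetry; apply extend_nonneg_eq; lra.
Qed.

Lemma tail_pos t : 0 < t -> 0 < lam t.
Proof.
  intros Ht. rewrite tail_regular_variation by auto. apply Rmult_lt_0_compat.
  - destruct HL as [H _]. apply H; lra.
  - unfold Rpower; apply exp_pos.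
Qed.

Lemma tail_0 : lam 0 = K.
Proof. unfold tail. rewrite integral_same by auto. ring. Qed.

Lemma tail_decr u v : 0 <= u -> u <= v -> lam v <= lam u.
Proof.
  intros Hu Huv. unfold tail. rewrite <- (integral_Chasles k0 Hk0 0 u v).
  assert (0 <= integral k0 u v) by (apply integral_ge0; auto; intros; left; apply Hk0_pos; lra).
  lra.
Qed.

Lemma K_pos : 0 < K.
Proof.
  pose proof (tail_pos 1 ltac:(lra)). pose proof (tail_decr 0 1 ltac:(lra) ltac:(lra)).
  rewrite tail_0 in *. lra.
Qed.

Lemma tail_bounds u : 0 <= u -> 0 <= lam u <= K.
Proof.
  intros Hu. pose proof (tail_decr 0 u (Rle_refl 0) Hu) as Hle. rewrite tail_0 in Hle.
  split; [|exact Hle].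
  destruct (Req_dec u 0) as [->|]; [rewrite tail_0; pose proof K_pos; lra|].
  left; apply tail_pos; lra.
Qed.

Lemma tail_deriv x : derivable_pt_lim lam x (- k0 x).
Proof.
  unfold tail. replace (- k0 x) with (0 - k0 x) by ring.
  apply (derivable_pt_lim_minus (fun _ => K) (fun u => integral k0 0 u)).
  - apply derivable_pt_lim_const.
  - apply derivable_pt_lim_integral; auto.
Qed.

Lemma integral_tail_tends : exists m,
  (forall S, 0 <= S -> integral lam 0 S <= m) /\ tends_at_infty (fun S => integral lam 0 S) m.
Proof.
  assert (Hnonneg : forall u, 0 <= u -> 0 <= lam u) by (intros; apply tail_bounds; auto).
  destruct (slowly_varying_doubling L alpha HL Halpha) as [t1 [q [Ht1 [Hq Hdouble]]]].
  destruct (doubling_integral_bounded lam Hlam Hnonneg tail_decr t1 q ltac:(lra) Hq)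
    as [C HC].
  { intros t Ht. rewrite !tail_regular_variation by lra. auto. }
  apply (nondecreasing_bounded_tends _ C); auto.
  apply integral_nonneg_mono; auto.
Qed.

Lemma first_moment_integral T :
  integral (fun s => s * k0 s) 0 T = integral lam 0 T - T * lam T.
Proof.
  set (D := fun T => integral (fun s => s * k0 s) 0 T - integral lam 0 T + T * lam T).
  assert (E : D T = D 0).
  { apply derivable_pt_lim_0_const_R. intro x.
    assert (Hd : derivable_pt_lim D x (x * k0 x - lam x + (1 * lam x + x * - k0 x))).
    { apply (derivable_pt_lim_plus
               (fun T => integral (fun s => s * k0 s) 0 T - integral lam 0 T)
               (fun T => T * lam T)).
      - apply (derivable_pt_lim_minus (fun T => integral (fun s => s * k0 s) 0 T)
                                      (fun T => integral lam 0 T)).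
        + apply (derivable_pt_lim_integral (fun s => s * k0 s)). continuity_tac.
        + apply derivable_pt_lim_integral; auto.
      - apply (derivable_pt_lim_mult (fun T => T) lam).
        + apply derivable_pt_lim_id.
        + apply tail_deriv. }
    replace (x * k0 x - lam x + (1 * lam x + x * - k0 x)) with 0 in Hd by ring. exact Hd. }
  unfold D in E. rewrite !integral_same in E by continuity_tac. lra.
Qed.

Lemma first_moment_improper m : tends_at_infty (fun S => integral lam 0 S) m ->
  improper_int (fun s => s * k s) 0 m.
Proof.
  intros Hm.
  assert (Hmoment : forall T, 0 <= T ->
            RInt_eq (fun s => s * k s) 0 T (integral (fun s => s * k0 s) 0 T)).
  { intros T HT. apply integral_RInt_eq; [continuity_tac | auto |].
    intros; rewrite extend_nonneg_eq; lra. }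
  split.
  - intros T HT. eexists; apply Hmoment; auto.
  - intros eps Heps. destruct (Hm (eps / 2) ltac:(lra)) as [S0 HS0].
    destruct (integrable_nonincreasing_mul_tends lam Hlam
                (fun u Hu => proj1 (tail_bounds u Hu)) tail_decr m Hm (eps / 2) ltac:(lra))
      as [S1 HS1].
    exists (Rmax S0 S1). intros T v HT HT0 Hv.
    rewrite (RInt_eq_integral (fun s => s * k s) (fun s => s * k0 s) 0 T v);
      [| continuity_tac | auto | intros; rewrite extend_nonneg_eq; lra | exact Hv].
    rewrite first_moment_integral.
    specialize (HS0 T ltac:(eapply Rle_trans; [apply Rmax_l | exact HT])).
    specialize (HS1 T ltac:(eapply Rle_trans; [apply Rmax_r | exact HT])).
    rewrite Rminus_0_r in HS1. apply Rabs_lt_between in HS0, HS1.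
    apply Rabs_def1; lra.
Qed.

Lemma resolvent_deriv t : 0 < t ->
  derivable_pt_lim r0 t (- K * r0 t + integral (fun s => k0 (t - s) * r0 s) 0 t).
Proof.
  intros Ht. destruct (Hr_deriv t Ht) as [v [Hv Hd]].
  rewrite <- (RInt_eq_integral (fun s => k (t - s) * r s) _ 0 t v);
    [| continuity_tac | lra | intros; rewrite !extend_nonneg_eq by lra; reflexivity | exact Hv].
  rewrite extend_nonneg_eq by lra. replace (- - a * r t + v) with (a * r t + v) by ring.
  apply (derivable_pt_lim_locally_eq r r0 t _ t); auto.
  intros y Hy. apply Rabs_lt_between in Hy. rewrite extend_nonneg_eq by lra. reflexivity.
Qed.

(* Maximum principle: at a point where [|r|] would first exceed [1], the
   equation makes [|r|] strictly decreasing. *)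
Lemma resolvent_abs_le_1 t : 0 <= t -> Rabs (r0 t) <= 1.
Proof.
  intros Ht.
  destruct (continuity_ab_maj (fun x => Rabs (r0 x)) 0 t Ht) as [ts [Hmax Hts]].
  { intros x _. apply (continuity_pt_comp r0 Rabs); [apply Hr0_cont | apply Rcontinuity_abs]. }
  simpl in Hmax. eapply Rle_trans; [apply Hmax; lra|].
  set (R := Rabs (r0 ts)). apply Rnot_lt_le. intro HR.
  assert (Hts0 : 0 < ts).
  { destruct Hts as [[Hpos | <-] _]; auto.
    unfold R in HR. rewrite extend_nonneg_eq, Hr0, Rabs_R1 in HR; lra. }
  assert (Hconv : Rabs (integral (fun s => k0 (ts - s) * r0 s) 0 ts) <= R * (K - lam ts)).
  { eapply Rle_trans.
    - apply integral_convolution_abs_le; auto; [lra | |].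
      + intros; left; apply Hk0_pos; lra.
      + intros; apply Hmax; lra.
    - rewrite Rminus_diag, Rminus_0_r. unfold tail, R. right; ring. }
  assert (HRlam : 0 < R * lam ts) by (apply Rmult_lt_0_compat; [lra | apply tail_pos; auto]).
  apply Rabs_le_between in Hconv.
  set (I := integral (fun s => k0 (ts - s) * r0 s) 0 ts) in Hconv.
  assert (Hsgn : r0 ts = R /\ - K * r0 ts + I < 0 \/ r0 ts = - R /\ 0 < - K * r0 ts + I).
  { unfold R in *; unfold Rabs in *; destruct (Rcase_abs (r0 ts)); [right | left];
      split; try lra; rewrite ?Ropp_involutive in *; nra. }
  assert (Hd : - K * r0 ts + I <> 0) by lra.
  destruct (derivable_pt_lim_sign_left r0 ts _ ts (resolvent_deriv ts Hts0) Hd Hts0)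
    as [h [Hh Hsign]].
  pose proof (Hmax (ts - h) ltac:(lra)) as Hmax_h. simpl in Hmax_h. fold R in Hmax_h.
  apply Rabs_le_between in Hmax_h. fold I in Hsign.
  destruct Hsgn as [[Heq Hneg] | [Heq Hpos]].
  - assert (0 < r0 (ts - h) - r0 ts) by nra. lra.
  - assert (r0 (ts - h) - r0 ts < 0) by nra. lra.
Qed.

Lemma resolvent_integrated t : 0 <= t ->
  r0 t + integral (fun s => lam (t - s) * r0 s) 0 t = 1.
Proof.
  intros Ht.
  set (G := fun t => r0 t + integral (fun s => lam (t - s) * r0 s) 0 t).
  assert (Hconv : forall x, derivable_pt_lim (fun t => integral (fun s => lam (t - s) * r0 s) 0 t) x
                   (lam 0 * r0 x + integral (fun s => - k0 (x - s) * r0 s) 0 x)).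
  { intro x. apply (derivable_pt_lim_convolution lam (fun u => - k0 u) r0);
      auto using tail_deriv; continuity_tac. }
  assert (E : G t = G 0).
  { apply derivable_pt_lim_0_const; auto.
    - intros x _. unfold G. apply continuity_pt_plus; [apply Hr0_cont|].
      apply derivable_continuous_pt. eexists; apply Hconv.
    - intros x Hx. unfold G.
      assert (Hd := derivable_pt_lim_plus _ _ _ _ _ (resolvent_deriv x ltac:(lra)) (Hconv x)).
      rewrite (integral_ext (fun s => - k0 (x - s) * r0 s) (fun s => -1 * (k0 (x - s) * r0 s)))
        in Hd by (intro; ring).
      rewrite integral_scal, tail_0 in Hd by continuity_tac.
      replace (- K * r0 x + integral (fun s => k0 (x - s) * r0 s) 0 x +
                (K * r0 x + -1 * integral (fun s => k0 (x - s) * r0 s) 0 x)) with 0 in Hd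
        by ring.
      exact Hd. }
  unfold G in E. rewrite integral_same, (extend_nonneg_eq r 0), Hr0 in E
    by first [lra | continuity_tac].
  lra.
Qed.

Lemma resolvent_eventually_le m :
  (forall S, 0 <= S -> integral lam 0 S <= m) -> tends_at_infty (fun S => integral lam 0 S) m ->
  forall d, 0 < d -> exists T, forall t, T <= t -> r t <= / (1 + m) + d.
Proof.
  intros Hm_le Hm d Hd.
  assert (Hm0 : 0 <= m) by (eapply Rle_trans; [|apply (Hm_le 0); lra];
                              rewrite integral_same by auto; lra).
  destruct (eventually_le k0 lam r0 K m 1 Hk0 Hlam Hr0_cont K_pos Hm0 Hk0_pos tail_bounds
              (fun S _ => ltac:(unfold tail; ring)) tail_tends Hm_le Hm resolvent_abs_le_1
              resolvent_integrated resolvent_deriv d Hd) as [T HT].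
  exists (Rmax 0 T). intros t Ht.
  rewrite <- (extend_nonneg_eq r t) by (eapply Rle_trans; [apply Rmax_l | exact Ht]).
  replace (/ (1 + m)) with (1 / (1 + m)) by (field; lra).
  apply HT. eapply Rle_trans; [apply Rmax_r | exact Ht].
Qed.

Lemma resolvent_eventually_ge m :
  (forall S, 0 <= S -> integral lam 0 S <= m) -> tends_at_infty (fun S => integral lam 0 S) m ->
  forall d, 0 < d -> exists T, forall t, T <= t -> / (1 + m) - d <= r t.
Proof.
  intros Hm_le Hm d Hd.
  assert (Hm0 : 0 <= m) by (eapply Rle_trans; [|apply (Hm_le 0); lra];
                              rewrite integral_same by auto; lra).
  destruct (eventually_le k0 lam (fun t => - r0 t) K m (-1) Hk0 Hlam ltac:(continuity_tac)
              K_pos Hm0 Hk0_pos tail_bounds (fun S _ => ltac:(unfold tail; ring)) tail_tends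
              Hm_le Hm) with (d := d) as [T HT]; auto.
  - intros t Ht. rewrite Rabs_Ropp. apply resolvent_abs_le_1; auto.
  - intros t Ht.
    rewrite (integral_ext _ (fun s => -1 * (lam (t - s) * r0 s))) by (intro; ring).
    rewrite integral_scal by continuity_tac.
    pose proof (resolvent_integrated t Ht). lra.
  - intros t Ht.
    rewrite (integral_ext (fun s => k0 (t - s) * - r0 s) (fun s => -1 * (k0 (t - s) * r0 s)))
      by (intro; ring).
    rewrite integral_scal by continuity_tac.
    replace (- K * - r0 t + -1 * integral (fun s => k0 (t - s) * r0 s) 0 t)
      with (- (- K * r0 t + integral (fun s => k0 (t - s) * r0 s) 0 t)) by ring.
    apply derivable_pt_lim_opp, resolvent_deriv; auto.
  - exists (Rmax 0 T). intros t Ht.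
    rewrite <- (extend_nonneg_eq r t) by (eapply Rle_trans; [apply Rmax_l | exact Ht]).
    specialize (HT t ltac:(eapply Rle_trans; [apply Rmax_r | exact Ht])).
    replace (-1 / (1 + m)) with (- / (1 + m)) in HT by (field; lra). lra.
Qed.

End Resolvent.

Theorem corollary3p2 (k L r : R -> R) (alpha a : R) :
  continuous_on_nonneg k ->
  (forall t, 0 <= t -> 0 < k t) ->
  improper_int k 0 (- a) ->
  1 < alpha ->
  slowly_varying L ->
  (forall t, 0 < t -> improper_int k t (L t * Rpower t (- alpha))) ->
  continuous_on_nonneg r ->
  r 0 = 1 ->
  (forall t, 0 < t -> exists v,
      RInt_eq (fun s => k (t - s) * r s) 0 t v /\
      derivable_pt_lim r t (a * r t + v)) ->
  exists m, improper_int (fun s => s * k s) 0 m /\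
            tends_at_infty r (/ (1 + m)).
Proof.
  intros Hk_cont Hk_pos Hk_int Halpha HL Hk_tail Hr_cont Hr0 Hr_deriv.
  destruct (integral_tail_tends k L alpha a) as [m [Hm_le Hm]]; auto.
  exists m. split.
  - apply (first_moment_improper k L alpha a); auto.
  - apply tends_at_infty_squeeze.
    + apply (resolvent_eventually_le k L r alpha a); auto.
    + apply (resolvent_eventually_ge k L r alpha a); auto.
Qed.
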